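(* Let $p\geq 5$ be a prime and $r$ a positive integer such that $3$ does not divide $p^r+1$, and let $A(x)=x^{p^r+2}$ on $\mathbb{F}_{p^{2r}}$. For every $a\in\mathbb{F}_{p^{2r}}^*$, the function $\Pi_a(x)=2ax^{p^r+1}+a^{p^r}x^2$ on $\mathbb{F}_{p^{2r}}$ (which differs from the difference function $\Delta_{A,a}(x)=A(x+a)-A(x)$ by an affine function) is EA-equivalent to $x^2$.
   Context: An additive function on $\mathbb{F}_{p^n}$ is one satisfying $L(x+y)=L(x)+L(y)$ for all $x,y$; an affine function is an additive function plus a constant. Two functions $f_1,f_2:\mathbb{F}_{p^n}\to\mathbb{F}_{p^n}$ are extended affine (EA) equivalent if there exist affine functions $l_1,l_2,l_3$ with $l_1,l_2$ permutations of $\mathbb{F}_{p^n}$ such that $f_1(x)=l_1(f_2(l_2(x)))+l_3(x)$ for all $x$. *)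

From HB Require Import structures.
From mathcomp Require Import all_boot all_order all_algebra all_field.
Set Implicit Arguments. Unset Strict Implicit. Unset Printing Implicit Defensive.
Import GRing.Theory.
Local Open Scope ring_scope.

Definition additive_fun (F : finFieldType) (L : F -> F) : Prop :=
  forall x y, L (x + y) = L x + L y.

Definition affine_fun (F : finFieldType) (l : F -> F) : Prop :=
  exists (L : F -> F) (c : F), additive_fun L /\ forall x, l x = L x + c.

Definition EA_equiv (F : finFieldType) (f1 f2 : F -> F) : Prop :=
  exists (l1 l2 l3 : F -> F),
    affine_fun l1 /\ affine_fun l2 /\ affine_fun l3 /\
    bijective l1 /\ bijective l2 /\
    (forall x, f1 x = l1 (f2 (l2 x)) + l3 x).

From HB Require Import structures.
From mathcomp Require Import all_boot all_order all_algebra all_field.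
From mathcomp Require Import all_fingroup all_solvable.
From mathcomp Require Import zify ring.
Set Implicit Arguments.
Unset Strict Implicit.
Unset Printing Implicit Defensive.

Import GRing.Theory.
Local Open Scope ring_scope.

(* Write q = p^r, so that x |-> x^q is the involutive Frobenius of F = F_{q^2},
   and X = x^q; Pi_a(x) = 2 a x X + a^q x^2.  Pick a primitive cube root of unity N; since q = 1 (mod 3),
   N lies in F_q, and c = a (1 + N) / a^q satisfies c c^q = (1 + N)^2 = N.
   Then, with Y = x + c X,
     Y^2 - c^2 (Y^2)^q = (1 - N^2) x^2 + 2 c (1 - N) x X,
   so Pi_a(x) = l1 (l2 x ^ 2) for the F_q-linear maps l2 x = x + c x^q and
   l1 z = a^q / (1 - N^2) (z - c^2 z^q).  A map z |-> z + d z^q has trivial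
   kernel whenever d d^q <> 1, which holds for d = c (as N <> 1) and for
   d = -c^2 (as N^2 <> 1). *)

Lemma additive_fun_bij (F : finFieldType) (f : F -> F) :
  additive_fun f -> (forall z, f z = 0 -> z = 0) -> bijective f.
Proof.
move=> fD f_ker; apply: injF_bij => x y fxy.
have f0 : f 0 = 0 by apply: (@addrI _ (f 0)); rewrite -fD !addr0.
have fN z : f (- z) = - f z.
  by apply: (@addrI _ (f z)); rewrite -fD !subrr.
by apply/eqP; rewrite -subr_eq0; apply/eqP/f_ker; rewrite fD fN fxy subrr.
Qed.

Lemma additive_fun_affine (F : finFieldType) (L : F -> F) :
  additive_fun L -> affine_fun L.
Proof. by move=> LD; exists L, 0; split => // x; rewrite addr0. Qed.

Lemma EA_equiv_additive (F : finFieldType) (f1 f2 L1 L2 : F -> F) :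
  additive_fun L1 -> (forall z, L1 z = 0 -> z = 0) ->
  additive_fun L2 -> (forall z, L2 z = 0 -> z = 0) ->
  (forall x, f1 x = L1 (f2 (L2 x))) -> EA_equiv f1 f2.
Proof.
move=> L1D L1_ker L2D L2_ker f1E; exists L1, L2, (fun _ => 0).
split; first exact: additive_fun_affine.
split; first exact: additive_fun_affine.
split; first by apply: additive_fun_affine => x y; rewrite addr0.
split; first exact: additive_fun_bij.
split; first exact: additive_fun_bij.
by move=> x; rewrite addr0.
Qed.

Lemma EA_equiv_ext (F : finFieldType) (f g h : F -> F) :
  EA_equiv g h -> (forall x, f x = g x) -> EA_equiv f h.
Proof.
move=> [l1 [l2 [l3 [? [? [? [? [? gE]]]]]]]] fg.
by exists l1, l2, l3; do 5!split => //; move=> x; rewrite fg gE.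
Qed.

Lemma cube_root_unity_fin (F : finFieldType) :
  (3 %| #|F|.-1)%N -> exists N : F, N ^+ 2 + N + 1 = 0.
Proof.
move=> dvd3.
have [u _ ou] : {u : {unit F} | u \in [set: {unit F}] & #[u]%g = 3%N}.
  by apply: Cauchy; rewrite // card_finField_unit.
pose N := FinRing.uval u; exists N.
have N3 : N ^+ 3 = 1 by rewrite /N -FinRing.val_unitX -ou expg_order.
have N1 : N != 1.
  apply: contra_eqN ou => /eqP N1; suff -> : u = 1%g by rewrite order1.
  exact: val_inj.
have : (N - 1) * (N ^+ 2 + N + 1) = 0.
  by transitivity (N ^+ 3 - 1); [ring | rewrite N3 subrr].
by move/eqP; rewrite mulf_eq0 subr_eq0 (negbTE N1) => /eqP.
Qed.

Lemma cube_root_unity_exp (R : comNzRingType) (N : R) (n : nat) :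
  N ^+ 2 + N + 1 = 0 -> N ^+ n = N ^+ (n %% 3).
Proof.
move=> N_cube; have N3 : N ^+ 3 = 1.
  apply/eqP; rewrite -subr_eq0; apply/eqP.
  by transitivity ((N - 1) * (N ^+ 2 + N + 1)); [ring | rewrite N_cube mulr0].
by rewrite {1}(divn_eq n 3) exprD mulnC exprM N3 expr1n mul1r.
Qed.

Lemma prime_pow_mod3 (p r : nat) :
  prime p -> (5 <= p)%N -> ~~ (3 %| p ^ r + 1)%N -> (p ^ r %% 3 = 1)%N.
Proof.
move=> p_pr p5 n3; have : ~~ (3 %| p ^ r)%N.
  rewrite Euclid_dvdX //; apply/negP => /andP[p3 _].
  by case/primeP: p_pr => _ /(_ 3 p3); lia.
lia.
Qed.

Section Frobenius.

Variables (F : finFieldType) (q : nat).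
Hypotheses (q_pchar : [pchar F].-nat q) (q_square : (q * q)%N = #|F|).

Let exprqD (x y : F) : (x + y) ^+ q = x ^+ q + y ^+ q.
Proof. exact: exprDn_pchar. Qed.

Let exprqK (x : F) : x ^+ q ^+ q = x.
Proof. by rewrite -exprM q_square expf_card. Qed.

Let expr0q : (0 : F) ^+ q = 0.
Proof.
have : (0 < #|F|)%N by apply/card_gt0P; exists 0.
by rewrite -q_square muln_gt0 expr0n eqn0Ngt => /andP[->].
Qed.

Lemma semilinear_additive (c : F) : additive_fun (fun x => x + c * x ^+ q).
Proof. by move=> x y; rewrite exprqD; ring. Qed.

Lemma semilinear_kernel (c : F) (z : F) :
  c * c ^+ q != 1 -> z + c * z ^+ q = 0 -> z = 0.
Proof.
move=> cc1 Lz.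
have Lzq : z ^+ q + c ^+ q * z = 0.
  by rewrite -[z in _ * z]exprqK -exprMn -exprqD Lz.
have : (1 - c * c ^+ q) * z = 0.
  transitivity (z + c * z ^+ q - c * (z ^+ q + c ^+ q * z)); first by ring.
  by rewrite Lz Lzq mulr0 subrr.
by move/eqP; rewrite mulf_eq0 subr_eq0 eq_sym (negbTE cc1) => /eqP.
Qed.

Lemma square_semilinear (c x : F) (y := x + c * x ^+ q) :
  y ^+ 2 + (- c ^+ 2) * (y ^+ 2) ^+ q
    = (1 - (c * c ^+ q) ^+ 2) * x ^+ 2 + 2%:R * c * (1 - c * c ^+ q) * x * x ^+ q.
Proof. by rewrite /y exprAC exprqD exprMn exprqK; ring. Qed.

Lemma EA_equiv_semilinear_square (c N al : F) :
  c * c ^+ q = N -> N ^+ 2 != 1 -> al != 0 ->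
  EA_equiv (fun x => al * ((1 - N ^+ 2) * x ^+ 2 + 2%:R * c * (1 - N) * x * x ^+ q))
           (fun x => x ^+ 2).
Proof.
move=> cc N2 al0; have N1 : N != 1 by apply: contraNneq N2 => ->; rewrite expr1n.
apply: (@EA_equiv_additive _ _ _
  (fun z => al * (z + (- c ^+ 2) * z ^+ q)) (fun x => x + c * x ^+ q)).
- by move=> x y /=; rewrite semilinear_additive mulrDr.
- move=> z /eqP; rewrite mulf_eq0 (negbTE al0) => /eqP; apply: semilinear_kernel.
  by rewrite exprNn_pchar // mulrNN exprAC -exprMn cc.
- exact: semilinear_additive.
- by move=> z; apply: semilinear_kernel; rewrite cc.
- by move=> x; rewrite square_semilinear cc.
Qed.

Lemma EA_equiv_binomial (a N : F) :
  a != 0 -> N ^+ 2 + N + 1 = 0 -> N ^+ q = N -> 3%:R != 0 :> F ->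
  EA_equiv (fun x => 2%:R * a * x ^+ (q + 1) + a ^+ q * x ^+ 2) (fun x => x ^+ 2).
Proof.
move=> a0 N_cube Nq three0.
have aq0 : a ^+ q != 0 by rewrite expf_neq0.
have N2 : N ^+ 2 != 1.
  apply: contra_neq three0 => N2.
  transitivity ((N ^+ 2 - 1) * (N - 1) - (N - 2%:R) * (N ^+ 2 + N + 1)); first by ring.
  by rewrite N_cube N2 subrr !mul0r mulr0 subrr.
pose c := a * (1 + N) / a ^+ q.
have cc : c * c ^+ q = N.
  rewrite /c !exprMn exprVn exprqK exprqD Nq expr1n.
  transitivity (N + (N ^+ 2 + N + 1)); last by rewrite N_cube addr0.
  by field; rewrite a0 aq0.
have N2' : 1 - N ^+ 2 != 0 by rewrite subr_eq0 eq_sym.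
have al0 : a ^+ q / (1 - N ^+ 2) != 0 by rewrite mulf_neq0 ?invr_eq0.
apply: EA_equiv_ext (EA_equiv_semilinear_square cc N2 al0) _ => x.
by rewrite addn1 exprSr /c; field; rewrite aq0 N2'.
Qed.

End Frobenius.

Theorem mainTheorem2 (p r : nat) (F : finFieldType) :
  prime p -> (5 <= p)%N -> (0 < r)%N -> ~~ (3 %| p ^ r + 1)%N ->
  #|F| = (p ^ (2 * r))%N ->
  forall a : F, a != 0 ->
    EA_equiv (fun x : F => 2%:R * a * x ^+ (p ^ r + 1) + a ^+ (p ^ r) * x ^+ 2)
             (fun x : F => x ^+ 2).
Proof.
move=> p_pr p5 _ n3 cardF a a0; set q := (p ^ r)%N.
have p_char : p \in [pchar F] := card_finPcharP cardF p_pr.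
have q_pchar : [pchar F].-nat q by rewrite pnatX (pnatE _ p_pr) p_char.
have q_square : (q * q)%N = #|F| by rewrite cardF -expnD addnn mul2n.
have q_mod3 : (q %% 3 = 1)%N := prime_pow_mod3 p_pr p5 n3.
have [N N_cube] : exists N : F, N ^+ 2 + N + 1 = 0.
  by apply: cube_root_unity_fin; rewrite -q_square; lia.
have Nq : N ^+ q = N by rewrite (cube_root_unity_exp _ N_cube) q_mod3.
have three0 : 3%:R != 0 :> F.
  rewrite -(dvdn_pcharf p_char); apply: contraTN p5.
  by move=> /(dvdn_leq (isT : (0 < 3)%N)); lia.
exact: (EA_equiv_binomial q_pchar q_square a0 N_cube Nq three0).
Qed.
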